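(* For every integer $t\ge1$, $\mathbf{N}^{(t)}=\mathbf{N}^t$.
   Context: Setting: a random colored substitution network with $\lambda$ colors: for each color $i\in\{1,\dots,\lambda\}$ there are finite arc-colored directed networks $R_{i1},\dots,R_{iq_i}$, each with distinguished nodes $A,B$, and probabilities $p_{ik}>0$ with $\sum_k p_{ik}=1$. One substitution step replaces every arc $(u,w)$ of color $i$ independently by a copy of $R_{ik}$ with probability $p_{ik}$, identifying $A$ with $u$ and $B$ with $w$ (other nodes new). $\deg_j^+(G:v)$, $\deg_j^-(G:v)$ denote the numbers of $j$-colored arcs leaving, resp. entering, $v$ in $G$. $\mathbf{N}$ is the $2\lambda\times2\lambda$ block matrix $(\overline{\mathbf{N}}_{ij})_{i,j=1}^\lambda$ with \[ \overline{\mathbf{N}}_{ij}=\sum_{k=1}^{q_i}p_{ik}\begin{pmatrix}\deg_j^+(R_{ik}:A)&\deg_j^-(R_{ik}:A)\\ \deg_j^+(R_{ik}:B)&\deg_j^-(R_{ik}:B)\end{pmatrix}. \] $\mathbf{N}^{(t)}$ is the $2\lambda\times2\lambda$ block matrix $(\overline{\mathbf{N}}^{(t)}_{ij})$ whose $2\times2$ block $\overline{\mathbf{N}}^{(t)}_{ij}$ has entries: (row 1) the expected number of $j$-colored arcs leaving, resp. entering, the node $A$, and (row 2) the expected number of $j$-colored arcs leaving, resp. entering, the node $B$, in the network obtained by starting from a single $i$-colored arc from $A$ to $B$ and performing $t$ successive substitution steps. *)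

From mathcomp Require Import all_boot all_order all_algebra.
Set Implicit Arguments. Unset Strict Implicit. Unset Printing Implicit Defensive.
Import Order.TTheory GRing.Theory Num.Theory.
Local Open Scope ring_scope.

(* An arc-colored directed (multi)network with [lam] colors.
   Nodes are 0, ..., nnodes-1; an arc is (source, target, color).
   The distinguished nodes are A = 0 and B = 1. *)
Record net (lam : nat) := Net { nnodes : nat; arcs : seq (nat * nat * 'I_lam) }.

Definition nodeA := 0%N.
Definition nodeB := 1%N.

Section Subst.
Variables (R : realFieldType) (lam : nat).
(* rules i = [:: (R_i1, p_i1); ...; (R_iq_i, p_iq_i)] *)
Variable rules : 'I_lam -> seq (net lam * R).

Definition well_formed (G : net lam) : bool :=
  (2 <= nnodes G)%N &&
  all (fun a : nat * nat * 'I_lam => (a.1.1 < nnodes G)%N && (a.1.2 < nnodes G)%N) (arcs G).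

Definition valid_rules : Prop :=
  forall i : 'I_lam,
    [/\ all (fun rp => well_formed rp.1) (rules i),
        all (fun rp => 0 < rp.2) (rules i)
      & \sum_(rp <- rules i) rp.2 = 1].

(* Copy of R replacing arc (u,w), new nodes numbered from [cur] on. *)
Definition relabel (cur u w : nat) (j : nat) : nat :=
  if j == 0%N then u else if j == 1%N then w else (cur + j - 2)%N.

Definition copy_arcs (cur u w : nat) (H : net lam) : seq (nat * nat * 'I_lam) :=
  [seq (relabel cur u w a.1.1, relabel cur u w a.1.2, a.2) | a <- arcs H].

(* All joint independent choices for the arcs [as], with their probability,
   the resulting arc list and the resulting node count. *)
Fixpoint expand (cur : nat) (as_ : seq (nat * nat * 'I_lam))
  : seq (R * seq (nat * nat * 'I_lam) * nat) :=
  match as_ with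
  | [::] => [:: (1, [::], cur)]
  | a :: as' =>
      flatten [seq [seq (rp.2 * x.1.1, copy_arcs cur a.1.1 a.1.2 rp.1 ++ x.1.2, x.2)
                   | x <- expand (cur + nnodes rp.1 - 2)%N as']
              | rp <- rules a.2]
  end.

Definition step (G : net lam) : seq (R * net lam) :=
  [seq (x.1.1, Net x.2 x.1.2) | x <- expand (nnodes G) (arcs G)].

Definition step_dist (D : seq (R * net lam)) : seq (R * net lam) :=
  flatten [seq [seq (wG.1 * y.1, y.2) | y <- step wG.2] | wG <- D].

Definition single_arc (i : 'I_lam) : net lam := Net 2 [:: (nodeA, nodeB, i)].

Definition dist_after (t : nat) (i : 'I_lam) : seq (R * net lam) :=
  iter t step_dist [:: (1, single_arc i)].

Definition deg_out (G : net lam) (j : nat) (v : nat) : nat :=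
  count (fun a : nat * nat * 'I_lam => (a.1.1 == v) && (nat_of_ord a.2 == j)) (arcs G).
Definition deg_in (G : net lam) (j : nat) (v : nat) : nat :=
  count (fun a : nat * nat * 'I_lam => (a.1.2 == v) && (nat_of_ord a.2 == j)) (arcs G).

(* Index conventions for the 2lam x 2lam block matrices: row 2*i + r with
   r = 0 for node A, r = 1 for node B; column 2*j + s with s = 0 for
   "leaving" (deg^+) and s = 1 for "entering" (deg^-). *)
Definition degs (G : net lam) (j : nat) (r s : nat) : nat :=
  let v := if r == 0%N then nodeA else nodeB in
  if s == 0%N then deg_out G j v else deg_in G j v.

Definition rules_nat (i : nat) : seq (net lam * R) :=
  match (insub i : option 'I_lam) with Some i' => rules i' | None => [::] end.

Definition Nmat : 'M[R]_(lam * 2) :=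
  \matrix_(a, b)
    \sum_(rp <- rules_nat (a %/ 2)%N)
       rp.2 * (degs rp.1 (b %/ 2)%N (a %% 2)%N (b %% 2)%N)%:R.

Definition dist_after_nat (t i : nat) : seq (R * net lam) :=
  match (insub i : option 'I_lam) with Some i' => dist_after t i' | None => [::] end.

Definition Nmat_t (t : nat) : 'M[R]_(lam * 2) :=
  \matrix_(a, b)
    \sum_(wG <- dist_after_nat t (a %/ 2)%N)
       wG.1 * (degs wG.2 (b %/ 2)%N (a %% 2)%N (b %% 2)%N)%:R.

End Subst.

From mathcomp Require Import all_boot all_order all_algebra.
From mathcomp Require Import zify ring.
Set Implicit Arguments. Unset Strict Implicit. Unset Printing Implicit Defensive.
Import Order.TTheory GRing.Theory Num.Theory.
Local Open Scope ring_scope.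

(* Row [(i, r)] of [N^(t)] is the mean degree vector of node [r] in the
   distribution reached after [t] steps from a single [i]-arc.  One more step
   replaces each arc [(u, w)] of colour [i] independently by a random copy of a
   rule [R_ik]; by linearity of expectation, and because the rule probabilities
   sum to 1, the mean degree vector of a node [v] after the step is the sum over
   the arcs at [v] of the rows [(i, A)] or [(i, B)] of [N], i.e. the degree
   vector of [v] times [N].  Hence [N^(t+1) = N^(t) N] and [N^(0) = 1]. *)

Lemma eq_big_all {R : Type} {idx : R} {op : R -> R -> R} {I : Type}
    (p : pred I) (r : seq I) (F1 F2 : I -> R) :
  all p r -> (forall x, p x -> F1 x = F2 x) ->
  \big[op/idx]_(x <- r) F1 x = \big[op/idx]_(x <- r) F2 x.
Proof.
move=> + eqF; elim: r => [|x r IH]; first by rewrite !big_nil.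
by move=> /= /andP[px pr]; rewrite !big_cons eqF // IH.
Qed.

Lemma all_flatten (T : Type) (p : pred T) (ss : seq (seq T)) :
  all p (flatten ss) = all (all p) ss.
Proof. by elim: ss => //= s ss IH; rewrite all_cat IH. Qed.

Lemma natr_count (R : pzSemiRingType) (T : Type) (p : pred T) (s : seq T) :
  (count p s)%:R = \sum_(x <- s) (p x)%:R :> R.
Proof. by elim: s => [|x s IH]; rewrite ?big_nil ?big_cons //= natrD IH. Qed.

Lemma big_nat_mul2 (V : nmodType) (F : nat -> V) n :
  \sum_(0 <= k < n * 2) F k = \sum_(0 <= i < n) (F (i * 2 + 0)%N + F (i * 2 + 1)%N).
Proof.
elim: n => [|n IH]; first by rewrite !big_geq.
by rewrite mulSnr addn2 !big_nat_recr //= IH addrA addn0 addn1.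
Qed.

Section MeanDegrees.

Variables (R : realFieldType) (lam : nat) (rules : 'I_lam -> seq (net lam * R)).

Local Notation arc := (nat * nat * 'I_lam)%type.

Definition arc_end (s : nat) (a : arc) : nat := if s == 0%N then a.1.1 else a.1.2.

Definition incident (s v j : nat) (a : arc) : bool :=
  (arc_end s a == v) && (nat_of_ord a.2 == j).

Definition row_node (r : nat) : nat := if r == 0%N then nodeA else nodeB.

Lemma row_node_lt2 r : (row_node r < 2)%N.
Proof. by rewrite /row_node; case: ifP. Qed.

Lemma degsE (G : net lam) j r s :
  degs G j r s = count (incident s (row_node r) j) (arcs G).
Proof. by rewrite /degs /deg_out /deg_in /incident /arc_end; case: (s == 0%N). Qed.

(* New nodes of a copy are numbered from [cur >= 2] on, so only the images of
   [A] and [B] can coincide with a node [v < 2]. *)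
Lemma count_incident_copy_arcs (H : net lam) cur u w s v j :
  (2 <= cur)%N -> (v < 2)%N ->
  count (incident s v j) (copy_arcs cur u w H) =
  ((u == v) * count (incident s 0 j) (arcs H)
   + (w == v) * count (incident s 1 j) (arcs H))%N.
Proof.
move=> cur_ge2 v_lt2; rewrite /copy_arcs count_map.
elim: (arcs H) => [|a l IH] /=; first by rewrite !muln0.
rewrite IH /incident.
have -> : arc_end s (relabel cur u w a.1.1, relabel cur u w a.1.2, a.2) =
          relabel cur u w (arc_end s a) by rewrite /arc_end; case: (s == 0%N).
case: (arc_end s a) => [|[|x]]; rewrite /relabel /=.
- by case: (u == v); case: (nat_of_ord a.2 == j) => /=; lia.
- by case: (w == v); case: (nat_of_ord a.2 == j) => /=; lia.
- by have -> : ((cur + x.+2 - 2)%N == v) = false by apply/negbTE; lia.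
Qed.

(* The entry [((i, r), (j, s))] of [N], i.e. entry [(r, s)] of the block [N_ij]. *)
Definition rule_degree (i : 'I_lam) (r j s : nat) : R :=
  \sum_(rp <- rules i) rp.2 * (count (incident s r j) (arcs rp.1))%:R.

Definition arc_contribution (v j s : nat) (a : arc) : R :=
  (a.1.1 == v)%:R * rule_degree a.2 0 j s + (a.1.2 == v)%:R * rule_degree a.2 1 j s.

Definition degree_row (G : net lam) (r : nat) : 'rV[R]_(lam * 2) :=
  \row_b (degs G (b %/ 2) r (b %% 2))%:R.

Definition mean_degree_row (D : seq (R * net lam)) (r : nat) : 'rV[R]_(lam * 2) :=
  \sum_(wG <- D) wG.1 *: degree_row wG.2 r.

Definition well_sized (D : seq (R * net lam)) : bool :=
  all (fun wG => 2 <= nnodes wG.2)%N D.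

Lemma divn_mul2D i r : (r < 2)%N -> ((i * 2 + r) %/ 2 = i)%N.
Proof. by move=> r_lt2; rewrite divnMDl // divn_small // addn0. Qed.

Lemma modn_mul2D i r : (r < 2)%N -> ((i * 2 + r) %% 2 = r)%N.
Proof. by move=> r_lt2; rewrite modnMDl modn_small. Qed.

Lemma rules_nat_degree (i : 'I_lam) r j s : (r < 2)%N ->
  \sum_(rp <- rules_nat rules i) rp.2 * (degs rp.1 j r s)%:R = rule_degree i r j s.
Proof.
move=> r_lt2; rewrite /rules_nat valK; apply: eq_bigr => rp _.
by rewrite degsE /row_node; case: r r_lt2 => [|[|]].
Qed.

Lemma degree_row_mulmx_Nmat (G : net lam) r (b : 'I_(lam * 2)) :
  (degree_row G r *m Nmat rules) 0 b
  = \sum_(a <- arcs G) arc_contribution (row_node r) (b %/ 2) (b %% 2) a.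
Proof.
rewrite mxE; under eq_bigr do rewrite !mxE degsE natr_count mulr_suml.
rewrite exchange_big; apply: eq_bigr => a _.
pose F k := (incident (k %% 2) (row_node r) (k %/ 2) a)%:R *
  \sum_(rp <- rules_nat rules (k %/ 2)) rp.2 * (degs rp.1 (b %/ 2) (k %% 2) (b %% 2))%:R.
rewrite -(big_mkord xpredT F) big_nat_mul2 big_mkord /F.
under eq_bigr => i _ do
  rewrite !divn_mul2D ?modn_mul2D ?rules_nat_degree //.
rewrite (bigD1 a.2) //= big1 ?addr0 => [|i ne_ia].
  by rewrite /incident /arc_end /= eqxx !andbT.
have a_ne_i : (nat_of_ord a.2 == nat_of_ord i) = false by apply/negbTE; rewrite eq_sym.
by rewrite /incident /= a_ne_i !andbF !mul0r addr0.
Qed.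

Lemma row_Nmat_t t (a : 'I_(lam * 2)) :
  row a (Nmat_t rules t) = mean_degree_row (dist_after_nat rules t (a %/ 2)) (a %% 2).
Proof. by apply/rowP => b; rewrite !mxE summxE; apply: eq_bigr => wG _; rewrite !mxE. Qed.

Lemma dist_after_nat_succ t i :
  dist_after_nat rules t.+1 i = step_dist rules (dist_after_nat rules t i).
Proof. by rewrite /dist_after_nat; case: insub. Qed.

Lemma Nmat_t0 : Nmat_t rules 0 = 1%:M.
Proof.
apply/matrixP => a b; rewrite !mxE.
have a_half_lt : (a %/ 2 < lam)%N by rewrite ltn_divLR.
rewrite /dist_after_nat insubT /= big_seq1 mul1r degsE /= /incident /arc_end.
rewrite /row_node /nodeA /nodeB /= addn0 -[a == b]/(nat_of_ord a == b).
congr (nat_of_bool _)%:R.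
apply/andP/eqP => [[/eqP same_ends /eqP same_half] | ->]; last by rewrite !eqxx.
by move: same_ends; do 2![case: ifP => /eqP]; lia.
Qed.

Hypothesis rules_valid : valid_rules rules.

Lemma expand_mass cur (as_ : seq arc) : \sum_(x <- expand rules cur as_) x.1.1 = 1.
Proof.
elim: as_ cur => [|a as_ IH] cur /=; first by rewrite big_seq1.
have [_ _ mass1] := rules_valid a.2.
rewrite big_flatten /= big_map -{}mass1; apply: eq_bigr => rp _.
by rewrite big_map -mulr_sumr IH mulr1.
Qed.

Lemma expand_nodes_ge cur (as_ : seq arc) :
  all (fun x => cur <= x.2)%N (expand rules cur as_).
Proof.
elim: as_ cur => [|a as_ IH] cur /=; first by rewrite leqnn.
have [wf _ _] := rules_valid a.2.
rewrite all_flatten all_map; apply: sub_all wf => rp /andP[nodes_ge2 _] /=.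
by rewrite all_map; apply: sub_all (IH _) => x /= /(leq_trans _)-> //; lia.
Qed.

Lemma expand_mean_count s v j (as_ : seq arc) cur : (2 <= cur)%N -> (v < 2)%N ->
  \sum_(x <- expand rules cur as_) x.1.1 * (count (incident s v j) x.1.2)%:R
  = \sum_(a <- as_) arc_contribution v j s a.
Proof.
move=> + v_lt2; elim: as_ cur => [|a as_ IH] cur cur_ge2 /=.
  by rewrite big_seq1 big_nil mulr0.
have [wf _ mass1] := rules_valid a.2.
set S := \sum_(b <- as_) arc_contribution v j s b.
rewrite big_cons big_flatten /= big_map.
transitivity (\sum_(rp <- rules a.2)
  (rp.2 * (count (incident s v j) (copy_arcs cur a.1.1 a.1.2 rp.1))%:R + rp.2 * S)).
  apply: (eq_big_all wf) => rp /andP[nodes_ge2 _]; rewrite big_map.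
  under eq_bigr do rewrite /= count_cat natrD mulrDr -!mulrA [_.1.1 * _]mulrC.
  rewrite big_split /= -!mulr_sumr expand_mass mulr1 IH //; lia.
rewrite big_split /= -mulr_suml mass1 mul1r; congr (_ + _).
rewrite /arc_contribution /rule_degree !mulr_sumr -big_split; apply: eq_bigr => rp _.
rewrite count_incident_copy_arcs // natrD !natrM /=; ring.
Qed.

Lemma step_well_sized (G : net lam) : (2 <= nnodes G)%N -> well_sized (step rules G).
Proof.
move=> G_ge2; rewrite /well_sized /step all_map.
by apply: sub_all (expand_nodes_ge _ _) => x /=; apply: leq_trans.
Qed.

Lemma step_dist_well_sized D : well_sized D -> well_sized (step_dist rules D).
Proof.
move=> wsD; rewrite /well_sized /step_dist all_flatten all_map.
by apply: sub_all wsD => wG /step_well_sized /=; rewrite all_map.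
Qed.

Lemma dist_after_nat_well_sized t i : well_sized (dist_after_nat rules t i).
Proof.
elim: t => [|t IH]; first by rewrite /dist_after_nat; case: insub.
by rewrite dist_after_nat_succ step_dist_well_sized.
Qed.

Lemma mean_degree_row_step (G : net lam) r : (2 <= nnodes G)%N ->
  mean_degree_row (step rules G) r = degree_row G r *m Nmat rules.
Proof.
move=> G_ge2; apply/rowP => b; rewrite degree_row_mulmx_Nmat summxE /step big_map.
under eq_bigr do rewrite !mxE degsE /=.
exact: expand_mean_count (row_node_lt2 r).
Qed.

Lemma mean_degree_row_step_dist D r : well_sized D ->
  mean_degree_row (step_dist rules D) r = mean_degree_row D r *m Nmat rules.
Proof.
move=> wsD; rewrite /mean_degree_row /step_dist big_flatten big_map mulmx_suml.
apply: (eq_big_all wsD) => wG G_ge2; rewrite big_map.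
under eq_bigr do rewrite /= -scalerA.
by rewrite -scaler_sumr -scalemxAl -mean_degree_row_step.
Qed.

Lemma Nmat_t_succ t : Nmat_t rules t.+1 = Nmat_t rules t *m Nmat rules.
Proof.
apply/row_matrixP => a.
by rewrite row_mul !row_Nmat_t dist_after_nat_succ mean_degree_row_step_dist
  ?dist_after_nat_well_sized.
Qed.

End MeanDegrees.

Theorem mainTheorem5 (R : realFieldType) (lam : nat)
    (rules : 'I_lam -> seq (net lam * R)) (t : nat) :
  valid_rules rules -> (1 <= t)%N ->
  Nmat_t rules t = (Nmat rules) ^+ t.
Proof.
(* The identity holds for [t = 0] as well. *)
move=> rules_valid _; elim: t => [|t IH]; first by rewrite expr0 Nmat_t0 idmxE.
by rewrite Nmat_t_succ // IH exprSr mulmxE.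
Qed.
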